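(* Let $F_3:\mathbb{R}^{d_s}\to\mathbb{R}^{2d_f\times 2d_f}$ and $G_{2,i}:\mathbb{R}^{d_s}\to\mathbb{R}^{2d_f\times 2d_f}$, $i=1,\dots,d_s$, be continuously differentiable, and assume that $F_3(q^s)^T G_{2,i}(q^s)$ is a symmetric matrix for every $q^s\in\mathbb{R}^{d_s}$ and every $i$. Define $\Phi:\mathbb{R}^{d_f}\times\mathbb{R}^{d_f}\times\mathbb{R}^{d_s}\times\mathbb{R}^{d_s}\to$ itself by $\Phi(q^f,p^f,q^s,p^s)=(\tilde q^f,\tilde p^f,\tilde q^s,\tilde p^s)$, where, writing $x=\begin{bmatrix} q^f\\ p^f\end{bmatrix}$, $$\begin{bmatrix}\tilde q^f\\ \tilde p^f\end{bmatrix}=F_3(q^s)\,x,\qquad \tilde q^s=q^s,\qquad \tilde p^s_i=p^s_i-\tfrac12\, x^T F_3(q^s)^T G_{2,i}(q^s)\,x\quad(i=1,\dots,d_s).$$ Then $\Phi$ is symplectic (i.e. $D\Phi(z)^T\mathbb{J}\,D\Phi(z)=\mathbb{J}$ for all $z$) if and only if, for every $q^s$, $F_3(q^s)^T J F_3(q^s)=J$ and $G_{2,i}(q^s)=-J\,\dfrac{\partial F_3}{\partial q^s_i}(q^s)$ for all $i=1,\dots,d_s$.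
   Context: Coordinates are ordered as $(q^f,p^f,q^s,p^s)$ with $q^f,p^f\in\mathbb{R}^{d_f}$, $q^s,p^s\in\mathbb{R}^{d_s}$. $J=\begin{bmatrix}0&I\\-I&0\end{bmatrix}$ denotes the standard symplectic matrix (of size $2d_f$ on the fast variables and of size $2d_s$ on the slow variables, with $I$ the identity of the appropriate size), and $\mathbb{J}=\begin{bmatrix}J&0\\0&J\end{bmatrix}$ is the canonical symplectic matrix on the full phase space. A map is symplectic if its Jacobian $D\Phi$ satisfies $D\Phi^T\mathbb{J}D\Phi=\mathbb{J}$; a matrix $F$ is symplectic if $F^TJF=J$. *)

From Stdlib Require Import Reals.
From mathcomp Require Import ssreflect ssrfun ssrbool eqtype ssrnat seq fintype bigop.

Set Implicit Arguments.
Unset Strict Implicit.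

Local Open Scope R_scope.

Definition vec (n : nat) := 'I_n -> R.
Definition mat (m n : nat) := 'I_m -> 'I_n -> R.

Definition meq (m n : nat) (A B : mat m n) : Prop := forall i j, A i j = B i j.

Definition mmul (m n p : nat) (A : mat m n) (B : mat n p) : mat m p :=
  fun i j => \big[Rplus/0]_(k < n) (A i k * B k j).

Definition mtr (m n : nat) (A : mat m n) : mat n m := fun i j => A j i.

Definition mopp (m n : nat) (A : mat m n) : mat m n := fun i j => - A i j.

Definition mvmul (m n : nat) (A : mat m n) (x : vec n) : vec m :=
  fun i => \big[Rplus/0]_(k < n) (A i k * x k).

Definition quad (n : nat) (A : mat n n) (x : vec n) : R :=
  \big[Rplus/0]_(a < n) \big[Rplus/0]_(b < n) (x a * A a b * x b).

Definition symmetric_mx (n : nat) (A : mat n n) : Prop := forall i j, A i j = A j i.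

(* J = [[0, I], [-I, 0]] of size 2n *)
Definition Jmat (n : nat) : mat (n + n)%N (n + n)%N :=
  fun i j =>
    match split i, split j with
    | inl a, inr b => if a == b then 1 else 0
    | inr a, inl b => if a == b then -1 else 0
    | _, _ => 0
    end.
Arguments Jmat : clear implicits.

(* canonical symplectic matrix on the full phase space (q^f,p^f,q^s,p^s) *)
Definition bigJ (df ds : nat) : mat (df + df + (ds + ds))%N (df + df + (ds + ds))%N :=
  fun i j =>
    match split i, split j with
    | inl a, inl b => Jmat df a b
    | inr a, inr b => Jmat ds a b
    | _, _ => 0
    end.
Arguments bigJ : clear implicits.

Definition symplectic_mx (n : nat) (F : mat (n + n)%N (n + n)%N) : Prop :=
  meq (mmul (mtr F) (mmul (Jmat n) F)) (Jmat n).

Definition shift (n : nat) (x : vec n) (i : 'I_n) (t : R) : vec n :=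
  fun k => x k + (if k == i then t else 0).

Definition has_partial (n : nat) (f : vec n -> R) (x : vec n) (i : 'I_n) (l : R) : Prop :=
  derivable_pt_lim (fun t => f (shift x i t)) 0 l.

Definition continuous_vec (n : nat) (g : vec n -> R) : Prop :=
  forall x eps, 0 < eps -> exists delta, 0 < delta /\
    forall y : vec n, (forall k, Rabs (y k - x k) < delta) -> Rabs (g y - g x) < eps.

Definition C1_vec (n : nat) (f : vec n -> R) : Prop :=
  exists df : 'I_n -> vec n -> R,
    (forall i x, has_partial f x i (df i x)) /\ (forall i, continuous_vec (df i)).

Definition Phi (df ds : nat)
    (F3 : vec ds -> mat (df + df)%N (df + df)%N)
    (G2 : 'I_ds -> vec ds -> mat (df + df)%N (df + df)%N)
    (z : vec (df + df + (ds + ds))%N) : vec (df + df + (ds + ds))%N :=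
  let x : vec (df + df)%N := fun a => z (lshift (ds + ds)%N a) in
  let qs : vec ds := fun i => z (rshift (df + df)%N (lshift ds i)) in
  let ps : vec ds := fun i => z (rshift (df + df)%N (rshift ds i)) in
  fun k =>
    match split k with
    | inl a => mvmul (F3 qs) x a
    | inr b =>
        match split b with
        | inl i => qs i
        | inr i => ps i - / 2 * quad (mmul (mtr (F3 qs)) (G2 i qs)) x
        end
    end.

Definition symplectic_map (df ds : nat)
    (Psi : vec (df + df + (ds + ds))%N -> vec (df + df + (ds + ds))%N) : Prop :=
  forall (z : vec (df + df + (ds + ds))%N)
         (D : mat (df + df + (ds + ds))%N (df + df + (ds + ds))%N),
    (forall a b, has_partial (fun w => Psi w a) z b (D a b)) ->
    meq (mmul (mtr D) (mmul (bigJ df ds) D)) (bigJ df ds).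

(** The Jacobian of [Phi] at [(x, q, p)] has the block shape
    [[F, A, 0], [0, I, 0], [B, C, I]] with [F = F3 q], [A] the matrix with columns [dF_j x],
    [B] the gradient in [x] of [-1/2 x^T F^T G_i x] and [C_ij = -1/2 x^T d_j(F^T G_i) x].
    Pulling the symplectic form back through it, [Phi] is symplectic iff [F^T J F = J],
    [F^T J A = B^T] and [A^T J A + C - C^T = 0] hold everywhere.  As [F^T G_i] is symmetric,
    the second condition says [F^T (J dF_i + G_i) x = 0] for all [x]; a symplectic [F] is
    invertible, so this amounts to [G_i = - J dF_i].  Given that, [d_j G_i = d_i G_j] by
    Schwarz's theorem applied to the entries of [- J F], and the third condition reduces to
    the antisymmetry of [J]. *)

From Stdlib Require Import Reals Lra ClassicalEpsilon FunctionalExtensionality.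
From mathcomp Require Import ssreflect ssrfun ssrbool eqtype ssrnat seq fintype bigop.
From mathcomp Require Import ssralg matrix.
From mathcomp Require Import Rstruct.

Set Implicit Arguments.
Unset Strict Implicit.
Import GRing.Theory.

Local Open Scope R_scope.

Lemma derivable_pt_lim_eq f x l l' :
  derivable_pt_lim f x l -> l = l' -> derivable_pt_lim f x l'.
Proof. by move=> ? <-. Qed.

Lemma derivable_pt_lim_big (I : Type) (r : seq I) (f : I -> R -> R) (l : I -> R) x :
  (forall k, derivable_pt_lim (f k) x (l k)) ->
  derivable_pt_lim (fun t => \big[Rplus/0]_(k <- r) f k t) x (\big[Rplus/0]_(k <- r) l k).
Proof.
move=> df; elim: r => [|a r IHr].
  rewrite big_nil; apply: (derivable_pt_lim_ext (fun _ => 0)); last exact: derivable_pt_lim_const.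
  by move=> t; rewrite big_nil.
rewrite big_cons; apply: (derivable_pt_lim_ext (fun t => f a t + \big[Rplus/0]_(k <- r) f k t)).
  by move=> t; rewrite big_cons.
exact: derivable_pt_lim_plus.
Qed.

Lemma derivable_pt_lim_shift n (x : vec n) a b t0 :
  derivable_pt_lim (fun t => shift x b t a) t0 (if a == b then 1 else 0).
Proof.
rewrite /shift; case: (a == b).
- apply: (derivable_pt_lim_ext (fun t => x a + t)); first by [].
  rewrite -[1]Rplus_0_l; apply: derivable_pt_lim_plus;
    [exact: derivable_pt_lim_const | exact: derivable_pt_lim_id].
- apply: (derivable_pt_lim_ext (fun _ => x a)); first by move=> t; ring.
  exact: derivable_pt_lim_const.
Qed.

Lemma shift_shift n (x : vec n) i s t : shift (shift x i s) i t = shift x i (s + t).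
Proof. by apply: functional_extensionality => k; rewrite /shift; case: (k == i); ring. Qed.

Lemma shiftC n (x : vec n) i j s t : shift (shift x i s) j t = shift (shift x j t) i s.
Proof. by apply: functional_extensionality => k; rewrite /shift; ring. Qed.

Lemma shift0 n (x : vec n) i : shift x i 0 = x.
Proof. by apply: functional_extensionality => k; rewrite /shift; case: (k == i); ring. Qed.

Lemma has_partial_along n (f fi : vec n -> R) (x : vec n) i s :
  (forall y, has_partial f y i (fi y)) ->
  derivable_pt_lim (fun t => f (shift x i t)) s (fi (shift x i s)).
Proof.
move=> df eps eps_gt0; have [delta Hdelta] := df (shift x i s) eps eps_gt0.
exists delta => h h_neq0 h_small; have := Hdelta h h_neq0 h_small.
by rewrite shift_shift shift0 Rplus_0_l.
Qed.

Section Schwarz.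
Variables (n : nat) (f fi fj fij fji : vec n -> R) (i j : 'I_n).
Hypotheses (dfi : forall x, has_partial f x i (fi x)) (dfj : forall x, has_partial f x j (fj x)).
Hypotheses (dfij : forall x, has_partial fi x j (fij x)).
Hypothesis dfji : forall x, has_partial fj x i (fji x).

Let P x s t := shift (shift x i s) j t.

Let PC x s t : P x s t = shift (shift x j t) i s.
Proof. exact: shiftC. Qed.

(* The mean value theorem, applied twice in either order to the second difference
   [f(P h h) - f(P h 0) - f(P 0 h) + f(P 0 0)], writes it both as [h^2 fij] and [h^2 fji]. *)
Lemma mixed_difference_mvt x h : 0 < h -> exists a b c d,
  [/\ 0 < a < h, 0 < b < h, 0 < c < h, 0 < d < h & fij (P x a b) = fji (P x c d)].
Proof.
move=> h_gt0; pose D := f (P x h h) - f (P x h 0) - f (P x 0 h) + f (P x 0 0).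
have [a [Ea ha]] : exists a, D = (fi (P x a h) - fi (P x a 0)) * (h - 0) /\ 0 < a < h.
  have -> : D = (f (P x h h) - f (P x h 0)) - (f (P x 0 h) - f (P x 0 0)) by rewrite /D; ring.
  apply: (MVT_cor2 (fun s => f (P x s h) - f (P x s 0))) => // s _.
  apply: (derivable_pt_lim_ext
    (fun s => f (shift (shift x j h) i s) - f (shift (shift x j 0) i s))).
    by move=> s'; rewrite !PC.
  by rewrite !PC; apply: derivable_pt_lim_minus; apply: has_partial_along.
have [b [Eb hb]] :
    exists b, fi (P x a h) - fi (P x a 0) = fij (P x a b) * (h - 0) /\ 0 < b < h.
  by apply: (MVT_cor2 (fun t => fi (P x a t))) => // t _; apply: has_partial_along.
have [d [Ed hd]] : exists d, D = (fj (P x h d) - fj (P x 0 d)) * (h - 0) /\ 0 < d < h.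
  have -> : D = (f (P x h h) - f (P x 0 h)) - (f (P x h 0) - f (P x 0 0)) by rewrite /D; ring.
  apply: (MVT_cor2 (fun t => f (P x h t) - f (P x 0 t))) => // t _.
  by apply: derivable_pt_lim_minus; apply: has_partial_along.
have [c [Ec hc]] :
    exists c, fj (P x h d) - fj (P x 0 d) = fji (P x c d) * (h - 0) /\ 0 < c < h.
  apply: (MVT_cor2 (fun s => fj (P x s d))) => // s _.
  apply: (derivable_pt_lim_ext (fun s => fj (shift (shift x j d) i s))).
    by move=> s'; rewrite PC.
  by rewrite PC; apply: has_partial_along.
exists a, b, c, d; split => //.
apply: (Rmult_eq_reg_r ((h - 0) * (h - 0))); last by nra.
by rewrite -!Rmult_assoc -Eb -Ec -Ea -Ed.
Qed.

Lemma shift2_dist x s t k : Rabs (P x s t k - x k) <= Rabs s + Rabs t.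
Proof. by rewrite /P /shift; case: (k == i); case: (k == j) => /=; split_Rabs; lra. Qed.

Hypotheses (cont_fij : continuous_vec fij) (cont_fji : continuous_vec fji).

Lemma has_partial_comm x : fij x = fji x.
Proof.
have close eps : 0 < eps -> Rabs (fij x - fji x) < 2 * eps.
  move=> eps_gt0; have [d1 [d1_gt0 H1]] := cont_fij x eps_gt0.
  have [d2 [d2_gt0 H2]] := cont_fji x eps_gt0.
  have [|a [b [c [d [ha hb hc hd E]]]]] := mixed_difference_mvt x (h := Rmin d1 d2 / 2).
    by have := Rmin_pos _ _ d1_gt0 d2_gt0; lra.
  have m1 := Rmin_l d1 d2; have m2 := Rmin_r d1 d2.
  have h1 : Rabs (fij (P x a b) - fij x) < eps.
    by apply: H1 => k; apply: (Rle_lt_trans _ _ _ (shift2_dist x a b k)); split_Rabs; lra.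
  have h2 : Rabs (fji (P x c d) - fji x) < eps.
    by apply: H2 => k; apply: (Rle_lt_trans _ _ _ (shift2_dist x c d k)); split_Rabs; lra.
  by rewrite E in h1; split_Rabs; lra.
case: (Req_dec (fij x) (fji x)) => // neq.
have pos : 0 < Rabs (fij x - fji x) by apply: Rabs_pos_lt; lra.
have := close (Rabs (fij x - fji x) / 4); lra.
Qed.
End Schwarz.

Section BlockAlgebra.
Variable K : comPzRingType.
Local Open Scope ring_scope.

Definition Jsympl n : 'M[K]_(n + n) := block_mx 0 1%:M (- 1%:M) 0.

Lemma tr_Jsympl n : (Jsympl n)^T = - Jsympl n.
Proof.
rewrite /Jsympl tr_block_mx !trmx0 trmx1 linearN /= trmx1.
by rewrite -[RHS]scaleN1r scale_block_mx !scaleN1r opprK !oppr0.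
Qed.

Lemma Jsympl_sqr n : Jsympl n *m Jsympl n = - 1%:M.
Proof.
rewrite /Jsympl mulmx_block !(mul0mx, mulmx0, mul1mx, mulmx1, add0r, addr0).
by rewrite scalar_mx_block opp_block_mx !oppr0.
Qed.

Lemma symplectic_trmx_lreg n (F Y : 'M[K]_(n + n)) :
  F^T *m (Jsympl n *m F) = Jsympl n -> F^T *m Y = 0 -> Y = 0.
Proof.
move=> sympF FY0.
have lFinv : - (Jsympl n *m F^T *m Jsympl n) *m F = 1%:M.
  by rewrite mulNmx -!mulmxA sympF Jsympl_sqr opprK.
have rFinv : (- (Jsympl n *m F^T *m Jsympl n))^T *m F^T = 1%:M.
  by rewrite -trmx_mul (mulmx1C lFinv) trmx1.
by rewrite -[Y]mul1mx -rFinv -[_ *m F^T *m Y]mulmxA FY0 mulmx0.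
Qed.

Definition bform n (u : 'cV[K]_n) (Y : 'M[K]_n) (v : 'cV[K]_n) : K :=
  (u^T *m Y *m v) ord0 ord0.

Lemma bformD n (u v : 'cV[K]_n) (Y Z : 'M[K]_n) :
  bform u (Y + Z) v = bform u Y v + bform u Z v.
Proof. by rewrite /bform mulmxDr mulmxDl mxE. Qed.

Lemma bformN n (u v : 'cV[K]_n) (Y : 'M[K]_n) : bform u (- Y) v = - bform u Y v.
Proof. by rewrite /bform mulmxN mulNmx mxE. Qed.

Lemma bformC n (u v : 'cV[K]_n) (Y : 'M[K]_n) : bform u Y v = bform v Y^T u.
Proof.
rewrite /bform; transitivity ((u^T *m Y *m v)^T ord0 ord0); first by rewrite [RHS]mxE.
by rewrite !trmx_mul trmxK mulmxA.
Qed.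

Lemma bform_mulmx n (u v : 'cV[K]_n) (Y Z : 'M[K]_n) :
  bform u (Y *m Z) v = bform u Y (Z *m v).
Proof. by rewrite /bform !mulmxA. Qed.

Lemma bform_trmx_mulmx n (u v : 'cV[K]_n) (Y Z : 'M[K]_n) :
  bform u (Y^T *m Z) v = bform (Y *m u) Z v.
Proof. by rewrite /bform trmx_mul !mulmxA. Qed.

Lemma mulmx_trmx_bformE m n (A : 'M[K]_(m, n)) (Y : 'M[K]_m) i j :
  (A^T *m Y *m A) i j = bform (col i A) Y (col j A).
Proof.
rewrite /bform !mxE; apply: eq_bigr => k _; rewrite !mxE; congr (_ * _).
by apply: eq_bigr => l _; rewrite !mxE.
Qed.

Section JacobianShape.
Variables (n s : nat) (Jn : 'M[K]_n).
Variables (F : 'M[K]_n) (A : 'M[K]_(n, s)) (B : 'M[K]_(s, n)) (C : 'M[K]_s).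

Definition jac_block : 'M[K]_(n + (s + s)) :=
  block_mx F (row_mx A 0) (col_mx 0 B) (block_mx 1%:M 0 C 1%:M).

Lemma jac_block_pullback :
  jac_block^T *m (block_mx Jn 0 0 (Jsympl s) *m jac_block) =
  block_mx (F^T *m (Jn *m F)) (row_mx (F^T *m (Jn *m A) - B^T) 0)
           (col_mx (A^T *m (Jn *m F) + B) 0)
           (block_mx (A^T *m (Jn *m A) + C - C^T) 1%:M (- 1%:M) 0).
Proof.
rewrite /jac_block /Jsympl !tr_block_mx tr_row_mx tr_col_mx !trmx0 !trmx1.
rewrite !mulmx_block !(mul0mx, mulmx0, mul1mx, mulmx1, add0r, addr0, mulNmx, mulmxN, oppr0).
rewrite !(mul_row_col, mul_col_mx, mul_mx_row, mul_row_block, mul_col_row, mul_block_col).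
rewrite !(mul0mx, mulmx0, mul1mx, mulmx1, add0r, addr0, mulNmx, mulmxN, oppr0).
rewrite !(add_row_mx, add_col_mx, addr0, add0r).
by congr block_mx; rewrite -block_mxEh -block_mxEv add_block_mx ?add0r ?addr0 ?addrA.
Qed.

Hypothesis tr_Jn : Jn^T = - Jn.

Lemma jac_block_symplecticP :
  jac_block^T *m (block_mx Jn 0 0 (Jsympl s) *m jac_block) = block_mx Jn 0 0 (Jsympl s) <->
  [/\ F^T *m (Jn *m F) = Jn, F^T *m (Jn *m A) = B^T & A^T *m (Jn *m A) + C - C^T = 0].
Proof.
rewrite jac_block_pullback /Jsympl; split.
  move=> /eq_block_mx [-> E12 _ /eq_block_mx [E22 _ _ _]]; split => //.
  by move: E12; rewrite -row_mx0 => /eq_row_mx [/eqP]; rewrite subr_eq0 => /eqP.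
move=> [-> E12 ->]; rewrite E12 subrr row_mx0.
suff -> : A^T *m (Jn *m F) + B = 0 by rewrite col_mx0.
by rewrite -[B]trmxK -E12 !trmx_mul trmxK tr_Jn mulmxN mulNmx mulmxA subrr.
Qed.
End JacobianShape.
End BlockAlgebra.

Section MatrixOfMat.
Local Open Scope ring_scope.

Definition mx_of m n (A : mat m n) : 'M[R]_(m, n) := \matrix_(i, j) A i j.
Definition cv_of n (x : vec n) : 'cV[R]_n := \col_i x i.

Lemma mx_ofK m n (A : 'M[R]_(m, n)) : mx_of (fun i j => A i j) = A.
Proof. by apply/matrixP => i j; rewrite mxE. Qed.

Lemma meq_mx_of m n (A B : mat m n) : meq A B <-> mx_of A = mx_of B.
Proof.
split=> [AB | /matrixP AB i j]; first by apply/matrixP => i j; rewrite !mxE AB.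
by have := AB i j; rewrite !mxE.
Qed.

Lemma mx_of_mmul m n p (A : mat m n) (B : mat n p) : mx_of (mmul A B) = mx_of A *m mx_of B.
Proof. by apply/matrixP => i j; rewrite !mxE; apply: eq_bigr => k _; rewrite !mxE. Qed.

Lemma mx_of_mtr m n (A : mat m n) : mx_of (mtr A) = (mx_of A)^T.
Proof. by apply/matrixP => i j; rewrite !mxE. Qed.

Lemma mx_of_mopp m n (A : mat m n) : mx_of (mopp A) = - mx_of A.
Proof. by apply/matrixP => i j; rewrite !mxE. Qed.

Lemma ord_split_ind m n (P : 'I_(m + n) -> Prop) :
  (forall a, P (lshift n a)) -> (forall b, P (rshift m b)) -> forall k, P k.
Proof. by move=> Pl Pr k; case: (split_ordP k) => a ->. Qed.

Lemma split_lshift m n (a : 'I_m) : split (lshift n a) = inl a.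
Proof. exact: (unsplitK (inl a)). Qed.

Lemma split_rshift m n (b : 'I_n) : split (rshift m b) = inr b.
Proof. exact: (unsplitK (inr b)). Qed.

Lemma mx_of_Jmat n : mx_of (Jmat n) = Jsympl R n.
Proof.
apply/matrixP; apply: ord_split_ind => a; apply: ord_split_ind => b;
  rewrite mxE /Jmat ?split_lshift ?split_rshift /Jsympl
    ?block_mxEul ?block_mxEur ?block_mxEdl ?block_mxEdr !mxE //.
  by case: (a == b).
by case: (a == b); rewrite /= ?oppr0.
Qed.

Lemma mx_of_bigJ df ds : mx_of (bigJ df ds) = block_mx (Jsympl R df) 0 0 (Jsympl R ds).
Proof.
apply/matrixP; apply: ord_split_ind => a; apply: ord_split_ind => b;
  by rewrite mxE /bigJ ?split_lshift ?split_rshift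
    ?block_mxEul ?block_mxEur ?block_mxEdl ?block_mxEdr -?mx_of_Jmat !mxE.
Qed.

Lemma symplectic_mxE n (F : mat (n + n) (n + n)) :
  symplectic_mx F <-> (mx_of F)^T *m (Jsympl R n *m mx_of F) = Jsympl R n.
Proof. by rewrite /symplectic_mx meq_mx_of mx_of_mmul mx_of_mtr mx_of_mmul mx_of_Jmat. Qed.

Lemma sum_indicator n (c : 'I_n -> R) b : \sum_(k < n) c k * (if k == b then 1 else 0) = c b.
Proof. by rewrite (bigD1 b) //= eqxx mulr1 big1 ?addr0 // => k /negbTE ->; rewrite mulr0. Qed.

Lemma quad_bform n (M : mat n n) x : quad M x = bform (cv_of x) (mx_of M) (cv_of x).
Proof.
rewrite /quad /bform !mxE exchange_big; apply: eq_bigr => b _.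
by rewrite !mxE mulr_suml; apply: eq_bigr => a _; rewrite !mxE.
Qed.

Lemma mulmx_cv_of_eq0 m n (X : 'M[R]_(m, n)) :
  (forall x : vec n, X *m cv_of x = 0) -> X = 0.
Proof.
move=> X0; apply/matrixP => a b; pose e : 'cV[R]_n := delta_mx b ord0.
have e_b : cv_of (fun c => e c ord0) = e by apply/matrixP => c d; rewrite (ord1 d) mxE.
have := X0 (fun c => e c ord0).
by rewrite e_b -(colE b X) => /matrixP/(_ a ord0); rewrite !mxE.
Qed.
End MatrixOfMat.

Lemma scalar1_mxE n (i j : 'I_n) : (1%:M : 'M[R]_n)%R i j = if i == j then 1 else 0.
Proof. by rewrite mxE; case: (i == j). Qed.

Lemma derivable_pt_lim_quad_mx n (M : R -> mat n n) (dM : mat n n) x :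
  (forall a b, derivable_pt_lim (fun t => M t a b) 0 (dM a b)) ->
  derivable_pt_lim (fun t => quad (M t) x) 0 (quad dM x).
Proof.
move=> dMab; do 2!apply: derivable_pt_lim_big => ?.
by apply: derivable_pt_lim_scal_right; apply: derivable_pt_lim_scal.
Qed.

Lemma derivable_pt_lim_quad_shift n (M : mat n n) x b :
  derivable_pt_lim (fun t => quad M (shift x b t)) 0
    (((mx_of M + (mx_of M)^T) *m cv_of x)%R b ord0).
Proof.
have -> : ((mx_of M + (mx_of M)^T) *m cv_of x)%R b ord0 =
    (\sum_(a < n) \sum_(c < n)
      ((if a == b then 1 else 0) * M a c * x c + x a * M a c * (if c == b then 1 else 0)))%R.
  rewrite mulmxDl mxE; under eq_bigr => a _ do rewrite big_split.
  rewrite big_split /=; congr (_ + _)%R.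
    rewrite (bigD1 b) //= eqxx [X in (_ + X)%R]big1 ?addr0 => [|a /negbTE ->].
      by rewrite !mxE; apply: eq_bigr => c _; rewrite mul1r !mxE.
    by apply: big1 => c _; rewrite !mul0r.
  rewrite exchange_big (bigD1 b) //= eqxx [X in (_ + X)%R]big1 ?addr0 => [|c /negbTE ->].
    by rewrite !mxE; apply: eq_bigr => a _; rewrite mulr1 !mxE mulrC.
  by apply: big1 => a _; rewrite !mulr0.
apply: derivable_pt_lim_big => a; apply: derivable_pt_lim_big => c.
have := derivable_pt_lim_mult _ _ 0 _ _
  (derivable_pt_lim_scal_right _ _ _ (M a c) (derivable_pt_lim_shift x a b 0))
  (derivable_pt_lim_shift x c b 0).
by rewrite shift0.
Qed.

Section PhaseSpace.
Variables n s : nat.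
Implicit Types (z : vec (n + (s + s))) (b : 'I_n) (j : 'I_s).

Definition xf z : vec n := fun a => z (lshift (s + s) a).
Definition qs z : vec s := fun i => z (rshift n (lshift s i)).
Definition ps z : vec s := fun i => z (rshift n (rshift s i)).

Lemma xf_shift_x z b t : xf (shift z (lshift _ b) t) = shift (xf z) b t.
Proof. by apply: functional_extensionality => a; rewrite /xf /shift eq_lshift. Qed.

Lemma xf_shift_qp z c t : xf (shift z (rshift _ c) t) = xf z.
Proof. by apply: functional_extensionality => a; rewrite /xf /shift eq_lrshift Rplus_0_r. Qed.

Lemma qs_shift_x z b t : qs (shift z (lshift _ b) t) = qs z.
Proof. by apply: functional_extensionality => i; rewrite /qs /shift eq_rlshift Rplus_0_r. Qed.

Lemma qs_shift_q z j t : qs (shift z (rshift _ (lshift _ j)) t) = shift (qs z) j t.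
Proof. by apply: functional_extensionality => i; rewrite /qs /shift !eq_rshift eq_lshift. Qed.

Lemma qs_shift_p z j t : qs (shift z (rshift _ (rshift _ j)) t) = qs z.
Proof.
by apply: functional_extensionality => i; rewrite /qs /shift !eq_rshift eq_lrshift Rplus_0_r.
Qed.

Lemma ps_shift_x z b t : ps (shift z (lshift _ b) t) = ps z.
Proof. by apply: functional_extensionality => i; rewrite /ps /shift eq_rlshift Rplus_0_r. Qed.

Lemma ps_shift_q z j t : ps (shift z (rshift _ (lshift _ j)) t) = ps z.
Proof.
by apply: functional_extensionality => i; rewrite /ps /shift !eq_rshift eq_rlshift Rplus_0_r.
Qed.

Lemma ps_shift_p z j t : ps (shift z (rshift _ (rshift _ j)) t) = shift (ps z) j t.
Proof. by apply: functional_extensionality => i; rewrite /ps /shift !eq_rshift. Qed.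

Definition phase_pt (x : vec n) (q : vec s) : vec (n + (s + s)) :=
  fun k => match split k with
  | inl a => x a
  | inr r => match split r with inl i => q i | inr _ => 0 end end.

Lemma xf_phase_pt x q : xf (phase_pt x q) = x.
Proof. by apply: functional_extensionality => a; rewrite /xf /phase_pt split_lshift. Qed.

Lemma qs_phase_pt x q : qs (phase_pt x q) = q.
Proof.
by apply: functional_extensionality => i; rewrite /qs /phase_pt split_rshift split_lshift.
Qed.
End PhaseSpace.

Lemma half_double (y : R) : - / 2 * (y + y) = - y.
Proof. field. Qed.

Lemma half_skew_cancel (a t : R) : a + - / 2 * (- - a + t) - - / 2 * (- a + t) = 0.
Proof. field. Qed.

Section Jacobian.
Variables df ds : nat.
Local Notation N := (df + df)%N.
Variables (F3 : vec ds -> mat N N) (G2 : 'I_ds -> vec ds -> mat N N).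
Variables (dF : 'I_ds -> vec ds -> mat N N) (dG : 'I_ds -> 'I_ds -> vec ds -> mat N N).
Hypothesis F3_partial : forall a b j q, has_partial (fun w => F3 w a b) q j (dF j q a b).
Hypothesis G2_partial :
  forall i a b j q, has_partial (fun w => G2 i w a b) q j (dG i j q a b).

Definition jac_A z : 'M[R]_(N, ds) :=
  \matrix_(a, j) (mx_of (dF j (qs z)) *m cv_of (xf z))%R a ord0.

Definition jac_B z : 'M[R]_(ds, N) := \matrix_(i, b)
  (- / 2 * ((mx_of (mmul (mtr (F3 (qs z))) (G2 i (qs z)))
             + (mx_of (mmul (mtr (F3 (qs z))) (G2 i (qs z))))^T) *m cv_of (xf z))%R b ord0).

Definition jac_C z : 'M[R]_ds := \matrix_(i, j)
  (- / 2 * bform (cv_of (xf z)) ((mx_of (dF j (qs z)))^T *m mx_of (G2 i (qs z))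
                                  + (mx_of (F3 (qs z)))^T *m mx_of (dG i j (qs z)))%R
                 (cv_of (xf z))).

Definition jacobian z := jac_block (mx_of (F3 (qs z))) (jac_A z) (jac_B z) (jac_C z).

Lemma derivable_pt_lim_FtG i j q b c :
  derivable_pt_lim (fun t => mmul (mtr (F3 (shift q j t))) (G2 i (shift q j t)) b c) 0
    (((mx_of (dF j q))^T *m mx_of (G2 i q) + (mx_of (F3 q))^T *m mx_of (dG i j q))%R b c).
Proof.
rewrite !mxE -big_split /=; apply: derivable_pt_lim_big => k.
have := derivable_pt_lim_mult _ _ 0 _ _ (F3_partial k b j q) (G2_partial i k c j q).
by rewrite shift0 !mxE.
Qed.

Lemma has_partial_Phi_x z a l :
  has_partial (fun w => Phi F3 G2 w (lshift _ a)) z l (jacobian z (lshift (ds + ds) a) l).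
Proof.
rewrite /has_partial /jacobian /jac_block.
apply: (derivable_pt_lim_ext (fun t => mvmul (F3 (qs (shift z l t))) (xf (shift z l t)) a)).
  by move=> t; rewrite /Phi split_lshift.
move: l; apply: ord_split_ind => [b|c]; rewrite ?block_mxEul ?block_mxEur.
  apply: (derivable_pt_lim_ext (fun t => mvmul (F3 (qs z)) (shift (xf z) b t) a)).
    by move=> t; rewrite qs_shift_x xf_shift_x.
  rewrite mxE -sum_indicator; apply: derivable_pt_lim_big => k.
  exact/derivable_pt_lim_scal/derivable_pt_lim_shift.
move: c; apply: ord_split_ind => j; rewrite ?row_mxEl ?row_mxEr !mxE.
  apply: (derivable_pt_lim_ext (fun t => mvmul (F3 (shift (qs z) j t)) (xf z) a)).
    by move=> t; rewrite qs_shift_q xf_shift_qp.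
  apply: derivable_pt_lim_big => k; rewrite !mxE.
  exact/derivable_pt_lim_scal_right/F3_partial.
apply: (derivable_pt_lim_ext (fun _ => mvmul (F3 (qs z)) (xf z) a)).
  by move=> t; rewrite qs_shift_p xf_shift_qp.
exact: derivable_pt_lim_const.
Qed.

Lemma has_partial_Phi_q z i l :
  has_partial (fun w => Phi F3 G2 w (rshift N (lshift _ i))) z l
    (jacobian z (rshift N (lshift ds i)) l).
Proof.
rewrite /has_partial /jacobian /jac_block.
apply: (derivable_pt_lim_ext (fun t => qs (shift z l t) i)).
  by move=> t; rewrite /Phi split_rshift split_lshift.
move: l; apply: ord_split_ind => [b|c]; rewrite ?block_mxEdl ?block_mxEdr ?col_mxEu.
  rewrite mxE; apply: (derivable_pt_lim_ext (fun _ => qs z i)).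
    by move=> t; rewrite qs_shift_x.
  exact: derivable_pt_lim_const.
move: c; apply: ord_split_ind => j; rewrite ?row_mxEl ?row_mxEr.
  rewrite scalar1_mxE; apply: (derivable_pt_lim_ext (fun t => shift (qs z) j t i)).
    by move=> t; rewrite qs_shift_q.
  exact: derivable_pt_lim_shift.
rewrite mxE; apply: (derivable_pt_lim_ext (fun _ => qs z i)).
  by move=> t; rewrite qs_shift_p.
exact: derivable_pt_lim_const.
Qed.

Lemma has_partial_Phi_p z i l :
  has_partial (fun w => Phi F3 G2 w (rshift N (rshift _ i))) z l
    (jacobian z (rshift N (rshift ds i)) l).
Proof.
rewrite /has_partial /jacobian /jac_block.
apply: (derivable_pt_lim_ext (fun t => ps (shift z l t) i
    - / 2 * quad (mmul (mtr (F3 (qs (shift z l t)))) (G2 i (qs (shift z l t))))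
                 (xf (shift z l t)))).
  by move=> t; rewrite /Phi !split_rshift.
move: l; apply: ord_split_ind => [b|c]; rewrite ?block_mxEdl ?block_mxEdr ?col_mxEd.
  apply: (derivable_pt_lim_ext (fun t => ps z i
      - / 2 * quad (mmul (mtr (F3 (qs z))) (G2 i (qs z))) (shift (xf z) b t))).
    by move=> t; rewrite ps_shift_x qs_shift_x xf_shift_x.
  rewrite mxE; apply: derivable_pt_lim_eq.
    apply: derivable_pt_lim_minus; first exact: derivable_pt_lim_const.
    exact/derivable_pt_lim_scal/derivable_pt_lim_quad_shift.
  by ring.
move: c; apply: ord_split_ind => j; rewrite ?row_mxEl ?row_mxEr.
  apply: (derivable_pt_lim_ext (fun t => ps z i
      - / 2 * quad (mmul (mtr (F3 (shift (qs z) j t))) (G2 i (shift (qs z) j t))) (xf z))).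
    by move=> t; rewrite ps_shift_q qs_shift_q xf_shift_qp.
  rewrite mxE; apply: derivable_pt_lim_eq.
    apply: derivable_pt_lim_minus; first exact: derivable_pt_lim_const.
    apply/derivable_pt_lim_scal/derivable_pt_lim_quad_mx => b c.
    exact: derivable_pt_lim_FtG.
  by rewrite quad_bform mx_ofK; ring.
apply: (derivable_pt_lim_ext (fun t => shift (ps z) j t i
    - / 2 * quad (mmul (mtr (F3 (qs z))) (G2 i (qs z))) (xf z))).
  by move=> t; rewrite ps_shift_p qs_shift_p xf_shift_qp.
rewrite scalar1_mxE; apply: derivable_pt_lim_eq.
  by apply: derivable_pt_lim_minus; [exact: derivable_pt_lim_shift | exact: derivable_pt_lim_const].
by ring.
Qed.

Lemma has_partial_Phi z k l : has_partial (fun w => Phi F3 G2 w k) z l (jacobian z k l).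
Proof.
move: k; apply: ord_split_ind => [a|r]; first exact: has_partial_Phi_x.
by move: r; apply: ord_split_ind => i; [exact: has_partial_Phi_q | exact: has_partial_Phi_p].
Qed.

(* [f = - (J F3)_ab] has partial derivatives [d_k f = (G2 k)_ab]; apply Schwarz to [f]. *)
Lemma G2_partial_comm (G2_cont : forall i j a b, continuous_vec (fun q => dG i j q a b))
    (G2E : forall i q, meq (G2 i q) (mopp (mmul (Jmat df) (dF i q)))) i j q :
  dG i j q = dG j i q.
Proof.
apply: functional_extensionality => a; apply: functional_extensionality => b.
pose f q := - \big[Rplus/0]_(k < N) (Jmat df a k * F3 q k b).
have f_partial k x : has_partial f x k (G2 k x a b).
  rewrite G2E; apply: derivable_pt_lim_opp; apply: derivable_pt_lim_big => c.
  exact/derivable_pt_lim_scal/F3_partial.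
exact: has_partial_comm (f_partial i) (f_partial j) (G2_partial i a b j) (G2_partial j a b i)
  (G2_cont i j a b) (G2_cont j i a b) q.
Qed.

Local Open Scope ring_scope.

Hypothesis FtG_sym : forall i q, symmetric_mx (mmul (mtr (F3 q)) (G2 i q)).

Local Notation J := (Jsympl R df).
Local Notation Fz z := (mx_of (F3 (qs z))).
Local Notation dFz i z := (mx_of (dF i (qs z))).
Local Notation Gz i z := (mx_of (G2 i (qs z))).

Lemma col_jac_A z i : col i (jac_A z) = dFz i z *m cv_of (xf z).
Proof. by apply/matrixP => a c; rewrite (ord1 c) !mxE. Qed.

Lemma jac_BE z i b : jac_B z i b = - ((Fz z)^T *m Gz i z *m cv_of (xf z)) b ord0.
Proof.
have M_sym : (mx_of (mmul (mtr (F3 (qs z))) (G2 i (qs z))))^T =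
             mx_of (mmul (mtr (F3 (qs z))) (G2 i (qs z))).
  by apply/matrixP => c d; rewrite !mxE FtG_sym.
rewrite mxE M_sym mulmxDl mxE mx_of_mmul mx_of_mtr; exact: half_double.
Qed.

Lemma pullback_mixed_blockE z : (Fz z)^T *m (J *m jac_A z) - (jac_B z)^T =
  \matrix_(b, i) ((Fz z)^T *m (J *m dFz i z + Gz i z) *m cv_of (xf z)) b ord0.
Proof.
apply/matrixP => b i.
have colX (X : 'M_N) : (X *m jac_A z) b i = (X *m (dFz i z *m cv_of (xf z))) b ord0.
  by rewrite -col_jac_A !mxE; apply: eq_bigr => k _; rewrite !mxE.
rewrite mxE mulmxA colX [X in _ + X]mxE [X in - X]mxE jac_BE opprK.
by rewrite [RHS]mxE mulmxDr mulmxDl [RHS]mxE !mulmxA; congr (_ + _); rewrite -mulmxA [RHS]mxE.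
Qed.

Lemma pullback_slow_block_eq0 z :
  (forall i q, mx_of (G2 i q) = - (J *m mx_of (dF i q))) ->
  (forall i j q, dG i j q = dG j i q) ->
  (jac_A z)^T *m (J *m jac_A z) + jac_C z - (jac_C z)^T = 0.
Proof.
move=> G2E dG_sym; apply/matrixP => i j.
pose u k := dFz k z *m cv_of (xf z).
pose t k l := bform (cv_of (xf z)) ((Fz z)^T *m mx_of (dG k l (qs z))) (cv_of (xf z)).
have eA : ((jac_A z)^T *m (J *m jac_A z)) i j = bform (u i) J (u j).
  by rewrite mulmxA mulmx_trmx_bformE !col_jac_A.
have eC k l : jac_C z k l = - Rinv 2 * (- bform (u l) J (u k) + t k l).
  by rewrite mxE bformD bform_trmx_mulmx G2E bformN bform_mulmx.
have skew : bform (u j) J (u i) = - bform (u i) J (u j) by rewrite bformC tr_Jsympl bformN.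
set A := _ *m (_ *m _); set C := jac_C z.
rewrite [RHS]mxE [LHS]mxE [(A + C) i j]mxE [(- C^T) i j]mxE [C^T i j]mxE eA !eC skew /t dG_sym.
exact: half_skew_cancel.
Qed.

Local Notation bigJmx := (block_mx J 0 0 (Jsympl R ds)).

Lemma symplectic_map_PhiE : symplectic_map (Phi F3 G2) <->
  forall z, (jacobian z)^T *m (bigJmx *m jacobian z) = bigJmx.
Proof.
have mx_ofE D : meq (mmul (mtr D) (mmul (bigJ df ds) D)) (bigJ df ds) <->
    (mx_of D)^T *m (bigJmx *m mx_of D) = bigJmx.
  by rewrite meq_mx_of !mx_of_mmul mx_of_mtr mx_of_bigJ.
split=> [sympl_Phi z | sympl_jac z D dPhi].
  by have /mx_ofE := sympl_Phi z _ (has_partial_Phi z); rewrite mx_ofK.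
have -> : D = fun a b => jacobian z a b.
  apply: functional_extensionality => a; apply: functional_extensionality => b.
  exact: uniqueness_limite (dPhi a b) (has_partial_Phi z a b).
by apply/mx_ofE; rewrite mx_ofK.
Qed.

Lemma G2_of_symplectic_Phi : symplectic_map (Phi F3 G2) ->
  forall q, symplectic_mx (F3 q) /\
    (forall i (dF' : mat N N), (forall a b, has_partial (fun w => F3 w a b) q i (dF' a b)) ->
       meq (G2 i q) (mopp (mmul (Jmat df) dF'))).
Proof.
move=> /symplectic_map_PhiE sympl_jac q.
have conds x := (jac_block_symplecticP _ _ _ _ (tr_Jsympl R df)).1 (sympl_jac (phase_pt x q)).
have [sympl_F _ _] := conds (fun _ => 0); rewrite qs_phase_pt in sympl_F.
split=> [|i dF' dF'_partial]; first exact/symplectic_mxE.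
have -> : dF' = dF i q.
  apply: functional_extensionality => a; apply: functional_extensionality => b.
  exact: uniqueness_limite (dF'_partial a b) (F3_partial a b i q).
apply/meq_mx_of; rewrite mx_of_mopp mx_of_mmul mx_of_Jmat.
apply/eqP; rewrite -subr_eq0 opprK addrC; apply/eqP/(symplectic_trmx_lreg sympl_F).
apply: mulmx_cv_of_eq0 => x; have [_ /eqP cond2 _] := conds x.
rewrite -subr_eq0 pullback_mixed_blockE qs_phase_pt xf_phase_pt in cond2.
apply/matrixP => b c; rewrite (ord1 c) [RHS]mxE.
by move: cond2 => /eqP/matrixP/(_ b i); rewrite [in X in X = _]mxE [in X in _ = X]mxE.
Qed.

Lemma symplectic_Phi_of_G2 (G2_cont : forall i j a b, continuous_vec (fun q => dG i j q a b)) :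
  (forall q, symplectic_mx (F3 q) /\
    (forall i (dF' : mat N N), (forall a b, has_partial (fun w => F3 w a b) q i (dF' a b)) ->
       meq (G2 i q) (mopp (mmul (Jmat df) dF')))) ->
  symplectic_map (Phi F3 G2).
Proof.
move=> conds.
have G2E i q : meq (G2 i q) (mopp (mmul (Jmat df) (dF i q))).
  by apply: (conds q).2 => a b; apply: F3_partial.
have G2mx i q : mx_of (G2 i q) = - (J *m mx_of (dF i q)).
  by rewrite -mx_of_Jmat -mx_of_mmul -mx_of_mopp; apply/meq_mx_of.
apply/symplectic_map_PhiE => z; apply/(jac_block_symplecticP _ _ _ _ (tr_Jsympl R df)); split.
- exact/symplectic_mxE/(conds _).1.
- apply/eqP; rewrite -subr_eq0 pullback_mixed_blockE; apply/eqP/matrixP => b i.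
  by rewrite [LHS]mxE G2mx addrN mulmx0 mul0mx !mxE.
- exact: pullback_slow_block_eq0 G2mx (G2_partial_comm G2_cont G2E).
Qed.
End Jacobian.

Lemma C1_partials (I : Type) (n : nat) (g : I -> vec n -> R) :
  (forall k, C1_vec (g k)) ->
  exists dg : I -> 'I_n -> vec n -> R,
    (forall k j x, has_partial (g k) x j (dg k j x)) /\ (forall k j, continuous_vec (dg k j)).
Proof.
move=> C1g; exists (fun k => proj1_sig (constructive_indefinite_description _ (C1g k))).
by split=> k; have [] := proj2_sig (constructive_indefinite_description _ (C1g k)).
Qed.

Unset Implicit Arguments.

Theorem lemma3p1 (df ds : nat)
    (F3 : vec ds -> mat (df + df)%N (df + df)%N)
    (G2 : 'I_ds -> vec ds -> mat (df + df)%N (df + df)%N)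
    (HF3 : forall a b : 'I_(df + df)%N, C1_vec (fun q : vec ds => F3 q a b))
    (HG2 : forall (i : 'I_ds) (a b : 'I_(df + df)%N), C1_vec (fun q : vec ds => G2 i q a b))
    (Hsym : forall i q, symmetric_mx (mmul (mtr (F3 q)) (G2 i q))) :
  symplectic_map (Phi F3 G2) <->
  (forall q : vec ds,
     symplectic_mx (F3 q) /\
     (forall (i : 'I_ds) (dF : mat (df + df)%N (df + df)%N),
        (forall a b, has_partial (fun w => F3 w a b) q i (dF a b)) ->
        meq (G2 i q) (mopp (mmul (Jmat df) dF)))).
Proof.
have [dF [F3_partial _]] :=
  C1_partials (fun ab : ('I_(df + df)%N * 'I_(df + df)%N)%type => HF3 ab.1 ab.2).
have [dG [G2_partial G2_cont]] :=
  C1_partials (fun iab : ('I_ds * 'I_(df + df)%N * 'I_(df + df)%N)%type =>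
                 HG2 iab.1.1 iab.1.2 iab.2).
pose dFf j q a b := dF (a, b) j q; pose dGf i j q a b := dG (i, a, b) j q.
have dFf_partial a b j q : has_partial (fun w => F3 w a b) q j (dFf j q a b).
  exact: (F3_partial (a, b)).
have dGf_partial i a b j q : has_partial (fun w => G2 i w a b) q j (dGf i j q a b).
  exact: (G2_partial (i, a, b)).
split; first exact: G2_of_symplectic_Phi dFf_partial dGf_partial Hsym.
by apply: symplectic_Phi_of_G2 dFf_partial dGf_partial Hsym _ => i j a b; exact: (G2_cont (i, a, b)).
Qed.
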